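(* Let $\boldsymbol{\mathcal{A}}\in\mathbb{C}^{N\times N\times M\times M}$ and $\mathbf{v},\mathbf{w}\in\mathbb{C}^N$ with $\mathbf{w}^H\mathbf{v}=1$, and run the tensor non-Hermitian Lanczos process (see context) with arbitrary nonsingular choices $\boldsymbol{\gamma}_2,\boldsymbol{\gamma}_3,\dots$. Let $n\ge1$ and suppose $\boldsymbol{\beta}_2,\dots,\boldsymbol{\beta}_n$ are all nonsingular, so that $\boldsymbol{\alpha}_1,\dots,\boldsymbol{\alpha}_n$, $\boldsymbol{\beta}_2,\dots,\boldsymbol{\beta}_n$, $\boldsymbol{\gamma}_2,\dots,\boldsymbol{\gamma}_n$ and hence $\boldsymbol{\mathcal{T}}_n$ are defined. Let $E_1=\mathbf{e}_1\otimes I_M\in\mathbb{C}^{n\times M\times M}$ and $E_1^D=\mathbf{e}_1\otimes I_M$, where $\mathbf{e}_1$ is the first canonical basis vector of $\mathbb{C}^n$. Then $$W^D*\boldsymbol{\mathcal{A}}^{k_*}*V=E_1^D*(\boldsymbol{\mathcal{T}}_n)^{k_*}*E_1\quad\text{for }k=0,1,\dots,2n-1.$$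
   Context: Slicing and products: for a 4-mode tensor, $\boldsymbol{\mathcal{A}}_{i_1,i_2,:,:}$ denotes the $M\times M$ matrix slice; for a 3-mode tensor, $A_{i,:,:}$ likewise. $*$-tensor product: $(\boldsymbol{\mathcal{A}}*\boldsymbol{\mathcal{B}})_{i_1,i_2,:,:}=\sum_k\boldsymbol{\mathcal{A}}_{i_1,k,:,:}\boldsymbol{\mathcal{B}}_{k,i_2,:,:}$. Tensor-hypervector product: $(\boldsymbol{\mathcal{A}}*A)_{i,:,:}=\sum_k\boldsymbol{\mathcal{A}}_{i,k,:,:}A_{k,:,:}$; left action of a 3-mode tensor $B^D$ (superscript $D$ marks tensors acting from the left): $(B^D*\boldsymbol{\mathcal{A}})^D_{i,:,:}=\sum_k B^D_{k,:,:}\boldsymbol{\mathcal{A}}_{k,i,:,:}$; hypervector inner product $B^D*A=\sum_kB^D_{k,:,:}A_{k,:,:}\in\mathbb{C}^{M\times M}$. These products are associative. For $\boldsymbol{\alpha}\in\mathbb{C}^{M\times M}$ and a 3-mode tensor $A$: $(A\times\boldsymbol{\alpha})_{i,:,:}=A_{i,:,:}\boldsymbol{\alpha}$, $(\boldsymbol{\alpha}\times A)_{i,:,:}=\boldsymbol{\alpha}A_{i,:,:}$. For $\mathbf{a}\in\mathbb{C}^N$, $\mathbf{a}\otimes I_M\in\mathbb{C}^{N\times M\times M}$ has slices $(\mathbf{a}\otimes I_M)_{i,:,:}=\mathbf{a}_iI_M$. The $*$-identity $\boldsymbol{\mathcal{I}}_*$ (of the appropriate size) has slices $I_M$ when $i_1=i_2$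 and $0$ otherwise; $\boldsymbol{\mathcal{A}}^{0_*}=\boldsymbol{\mathcal{I}}_*$ and $\boldsymbol{\mathcal{A}}^{k_*}$ is the $k$-fold $*$-product of $\boldsymbol{\mathcal{A}}$ with itself. Tensor non-Hermitian Lanczos process: set $V=\mathbf{v}\otimes I_M$, $W^D=\overline{\mathbf{w}}\otimes I_M$, $V_0=W_0^D=0$, $\boldsymbol{\beta}_1=0$, $V_1=V$, $W_1^D=W^D$. For $k=1,2,\dots$: $\boldsymbol{\alpha}_k=W_k^D*\boldsymbol{\mathcal{A}}*V_k$; $\widehat W_{k+1}^D=W_k^D*\boldsymbol{\mathcal{A}}-\boldsymbol{\alpha}_k\times W_k^D-\boldsymbol{\beta}_k\times W_{k-1}^D$; $\widehat V_{k+1}=\boldsymbol{\mathcal{A}}*V_k-V_k\times\boldsymbol{\alpha}_k-V_{k-1}\times\boldsymbol{\gamma}_k$ (the term with $\boldsymbol{\gamma}_1$ vanishes since $V_0=0$); choose a nonsingular $\boldsymbol{\gamma}_{k+1}\in\mathbb{C}^{M\times M}$; $\boldsymbol{\beta}_{k+1}=\boldsymbol{\gamma}_{k+1}^{-1}(\widehat W_{k+1}^D*\widehat V_{k+1})$; if $\boldsymbol{\beta}_{k+1}$ is singular the process stops, otherwise $V_{k+1}=\widehat V_{k+1}\times\boldsymbol{\beta}_{k+1}^{-1}$ and $W_{k+1}^D=\boldsymbol{\gamma}_{k+1}^{-1}\times\widehat W_{k+1}^D$. Tridiagonal tensor $\boldsymbol{\mathcal{T}}_n\in\mathbb{C}^{n\times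 n\times M\times M}$: $(\boldsymbol{\mathcal{T}}_n)_{i,i,:,:}=\boldsymbol{\alpha}_i$ ($1\le i\le n$), $(\boldsymbol{\mathcal{T}}_n)_{i,i+1,:,:}=\boldsymbol{\gamma}_{i+1}$ ($1\le i\le n-1$), $(\boldsymbol{\mathcal{T}}_n)_{i,i-1,:,:}=\boldsymbol{\beta}_i$ ($2\le i\le n$), all other slices zero. *)

From HB Require Import structures.
From mathcomp Require Import all_boot all_order all_algebra.
Set Implicit Arguments. Unset Strict Implicit. Unset Printing Implicit Defensive.
Import Order.TTheory GRing.Theory Num.Theory.
Local Open Scope ring_scope.

Section Tensors.
Variables (C : numClosedFieldType) (M : nat).

(* 4-mode tensor in C^{N x N x M x M}: slices A i1 i2 : 'M_M *)
Definition tensor4 (N : nat) := 'I_N -> 'I_N -> 'M[C]_M.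
(* 3-mode tensor (hypervector) in C^{N x M x M} *)
Definition hvec (N : nat) := 'I_N -> 'M[C]_M.

Definition tmul N (A B : tensor4 N) : tensor4 N :=
  fun i1 i2 => \sum_(k < N) A i1 k *m B k i2.
Definition tvmul N (A : tensor4 N) (X : hvec N) : hvec N :=
  fun i => \sum_(k < N) A i k *m X k.
Definition vtmul N (B : hvec N) (A : tensor4 N) : hvec N :=
  fun i => \sum_(k < N) B k *m A k i.
Definition hdot N (B X : hvec N) : 'M[C]_M := \sum_(k < N) B k *m X k.
Definition hscr N (X : hvec N) (a : 'M[C]_M) : hvec N := fun i => X i *m a.
Definition hscl N (a : 'M[C]_M) (X : hvec N) : hvec N := fun i => a *m X i.
Definition hadd N (X Y : hvec N) : hvec N := fun i => X i + Y i.
Definition hopp N (X : hvec N) : hvec N := fun i => - X i.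
Definition hzero N : hvec N := fun _ => 0.
Definition kronI N (a : 'I_N -> C) : hvec N := fun i => a i *: 1%:M.
Definition tid N : tensor4 N := fun i1 i2 => if i1 == i2 then 1%:M else 0.
Definition tpow N (A : tensor4 N) (k : nat) : tensor4 N := iter k (tmul A) (@tid N).

(* State of the Lanczos process at step k >= 1:
   (V_{k-1}, V_k, W^D_{k-1}, W^D_k, beta_k). *)
Record lstate N := LState {
  Vprev : hvec N; Vcur : hvec N; Wprev : hvec N; Wcur : hvec N; betacur : 'M[C]_M }.

Definition lalpha N (A : tensor4 N) (s : lstate N) : 'M[C]_M :=
  hdot (vtmul (Wcur s) A) (Vcur s).

(* one step k -> k+1, with gk = gamma_k, gk1 = gamma_{k+1} *)
Definition lstep N (A : tensor4 N) (gk gk1 : 'M[C]_M) (s : lstate N) : lstate N :=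
  let a := lalpha A s in
  let What := hadd (vtmul (Wcur s) A)
                   (hopp (hadd (hscl a (Wcur s)) (hscl (betacur s) (Wprev s)))) in
  let Vhat := hadd (tvmul A (Vcur s))
                   (hopp (hadd (hscr (Vcur s) a) (hscr (Vprev s) gk))) in
  let b := invmx gk1 *m hdot What Vhat in
  LState (Vcur s) (hscr Vhat (invmx b)) (Wcur s) (hscl (invmx gk1) What) b.

(* lanczos A V W gam k = state at step k.+1 (k >= 0) *)
Fixpoint lanczos N (A : tensor4 N) (V W : hvec N) (gam : nat -> 'M[C]_M) (k : nat)
  : lstate N :=
  match k with
  | 0 => LState (@hzero N) V (@hzero N) W 0
  | k'.+1 => lstep A (gam k) (gam k.+1) (lanczos A V W gam k')
  end.

(* 1-based accessors: alpha_k, beta_k (k >= 1) *)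
Definition alpha N A V W gam (k : nat) : 'M[C]_M := lalpha A (@lanczos N A V W gam k.-1).
Definition beta N A V W gam (k : nat) : 'M[C]_M := betacur (@lanczos N A V W gam k.-1).

(* tridiagonal tensor T_n (0-based indices i, j of 'I_n correspond to i+1, j+1) *)
Definition Ttri N A V W gam (n : nat) : tensor4 n := fun i j =>
  if val i == val j then alpha A V W gam (val i).+1
  else if (val j == (val i).+1) then gam (val i).+2
  else if (val i == (val j).+1) then @beta N A V W gam (val i).+1
  else 0.

Definition Efirst (n : nat) : hvec n := fun i => if val i == 0%N then 1%:M else 0.

End Tensors.

Arguments Ttri {C M N} A V W gam n _ _.
Arguments Efirst {C M} n _.
Arguments tid {C M} N _ _.
Arguments hzero {C M} N _.

From HB Require Import structures.
From mathcomp Require Import all_boot all_order all_algebra.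
From mathcomp Require Import zify.
From Stdlib Require Import FunctionalExtensionality.
Set Implicit Arguments. Unset Strict Implicit. Unset Printing Implicit Defensive.
Import Order.TTheory GRing.Theory Num.Theory.
Local Open Scope ring_scope.

(* The three-term recurrences make the Lanczos bases biorthogonal, W_i * V_j = delta_ij I_M.
   Packaging the first n vectors as combinations, the recurrences read A * (sum_j V_j c_j) = sum_j V_j (T_n * c)_j
   + \hat V_{n+1} c_n, and dually for W^D.  Since T_n^b * E_1 vanishes beyond index b,
   this gives A^b * V = sum_j V_j (T_n^b * E_1)_j for b <= n-1, dually W^D * A^a for
   a <= n-1, and one further factor A adds only a multiple of \hat V_{n+1}, which is
   orthogonal to all W_i.  Biorthogonality then turns W^D * A^(a+b) * V into
   E_1^D * T_n^(a+b) * E_1 whenever a <= n-1 and b <= n, i.e. for every k <= 2n-1. *)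

Section HypervectorAlgebra.
Variables (C : numClosedFieldType) (M N : nat).
Implicit Types (A B : tensor4 C M N) (X Y Z : hvec C M N) (a : 'M[C]_M).

Lemma hdot_vtmul A Y X : hdot (vtmul Y A) X = hdot Y (tvmul A X).
Proof.
rewrite /hdot /vtmul /tvmul.
under eq_bigr => i _ do rewrite mulmx_suml.
rewrite exchange_big; apply: eq_bigr => k _.
by rewrite mulmx_sumr; apply: eq_bigr => i _; rewrite mulmxA.
Qed.

Lemma vtmul_tmul Y A B : vtmul Y (tmul A B) = vtmul (vtmul Y A) B.
Proof.
apply: functional_extensionality => i; rewrite /vtmul /tmul.
under eq_bigr => k _ do rewrite mulmx_sumr.
rewrite exchange_big; apply: eq_bigr => l _.
by rewrite mulmx_suml; apply: eq_bigr => k _; rewrite mulmxA.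
Qed.

Lemma vtmul_tid Y : vtmul Y (tid N) = Y.
Proof.
apply: functional_extensionality => i; rewrite /vtmul /tid.
rewrite (bigD1 i) //= eqxx mulmx1 big1 ?addr0 // => k /negbTE ->.
by rewrite mulmx0.
Qed.

Definition vtiter A k Y := iter k (fun Z => vtmul Z A) Y.
Definition tviter A k X := iter k (tvmul A) X.

Lemma vtmul_tpow Y A k : vtmul Y (tpow A k) = vtiter A k Y.
Proof.
elim: k Y => [|k IHk] Y; first exact: vtmul_tid.
by rewrite /vtiter iterSr -/(vtiter A k _) -IHk -vtmul_tmul.
Qed.

Lemma hdot_vtiter A k Y X : hdot (vtiter A k Y) X = hdot Y (tviter A k X).
Proof.
elim: k Y => [|k IHk] Y //.
by rewrite /vtiter iterSr -/(vtiter A k _) IHk hdot_vtmul.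
Qed.

Lemma hdot_tpowD A p q Y X :
  hdot (vtmul Y (tpow A (p + q))) X = hdot (vtiter A p Y) (tviter A q X).
Proof. by rewrite vtmul_tpow /vtiter addnC iterD -!/(vtiter A _ _) hdot_vtiter. Qed.

Lemma hdot_addl X Y Z : hdot (hadd X Y) Z = hdot X Z + hdot Y Z.
Proof. by rewrite /hdot -big_split; apply: eq_bigr => i _; rewrite mulmxDl. Qed.
Lemma hdot_addr X Y Z : hdot Z (hadd X Y) = hdot Z X + hdot Z Y.
Proof. by rewrite /hdot -big_split; apply: eq_bigr => i _; rewrite mulmxDr. Qed.
Lemma hdot_oppl X Z : hdot (hopp X) Z = - hdot X Z.
Proof. by rewrite /hdot -sumrN; apply: eq_bigr => i _; rewrite mulNmx. Qed.
Lemma hdot_oppr X Z : hdot Z (hopp X) = - hdot Z X.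
Proof. by rewrite /hdot -sumrN; apply: eq_bigr => i _; rewrite mulmxN. Qed.
Lemma hdot_hscl a X Z : hdot (hscl a X) Z = a *m hdot X Z.
Proof. by rewrite /hdot mulmx_sumr; apply: eq_bigr => i _; rewrite mulmxA. Qed.
Lemma hdot_hscr a X Z : hdot Z (hscr X a) = hdot Z X *m a.
Proof. by rewrite /hdot mulmx_suml; apply: eq_bigr => i _; rewrite mulmxA. Qed.
Lemma hdot0l Z : hdot (hzero N) Z = 0.
Proof. by rewrite /hdot big1 // => i _; rewrite mul0mx. Qed.
Lemma hdot0r Z : hdot Z (hzero N) = 0.
Proof. by rewrite /hdot big1 // => i _; rewrite mulmx0. Qed.

Lemma hdot_kronI (a b : 'I_N -> C) :
  hdot (kronI M a) (kronI M b) = (\sum_(i < N) a i * b i)%:M.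
Proof.
rewrite /hdot /kronI -[in RHS]scalemx1 scaler_suml.
by apply: eq_bigr => i _; rewrite -scalemxAl mul1mx scalerA.
Qed.

End HypervectorAlgebra.

Section HypervectorExtension.
Variables (C : numClosedFieldType) (M n : nat).
Implicit Types (c : hvec C M n) (F : nat -> 'M[C]_M).

Definition hext c (j : nat) : 'M[C]_M := if insub j is Some i then c i else 0.

Lemma hext_ord c (i : 'I_n) : hext c i = c i.
Proof. by rewrite /hext valK. Qed.

Lemma hext_out c j : (n <= j)%N -> hext c j = 0.
Proof. by move=> le_nj; rewrite /hext insubN // -leqNgt. Qed.

Lemma sum_ord_eq F m : ((n <= m)%N -> F m = 0) ->
  \sum_(k < n) (if k == m :> nat then F k else 0) = F m.
Proof. by move=> Fout; rewrite -big_mkcond big_ord1_eq; case: ltnP => // /Fout. Qed.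

End HypervectorExtension.

Section Lanczos.
Variables (C : numClosedFieldType) (M N : nat) (A : tensor4 C M N)
  (V W : hvec C M N) (gam : nat -> 'M[C]_M).

(* Indices are shifted by one from the paper: lanV k, lanalpha k and lanbeta k are
   V_{k+1}, alpha_{k+1} and beta_{k+1}, and lanVhat k is \hat V_{k+2}. *)
Definition lanV k := Vcur (lanczos A V W gam k).
Definition lanW k := Wcur (lanczos A V W gam k).
Definition lanVprev k := Vprev (lanczos A V W gam k).
Definition lanWprev k := Wprev (lanczos A V W gam k).
Definition lanalpha k := lalpha A (lanczos A V W gam k).
Definition lanbeta k := betacur (lanczos A V W gam k).
Definition lanVhat k := hadd (tvmul A (lanV k))
  (hopp (hadd (hscr (lanV k) (lanalpha k)) (hscr (lanVprev k) (gam k.+1)))).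
Definition lanWhat k := hadd (vtmul (lanW k) A)
  (hopp (hadd (hscl (lanalpha k) (lanW k)) (hscl (lanbeta k) (lanWprev k)))).

Lemma lanV_S k : lanV k.+1 = hscr (lanVhat k) (invmx (lanbeta k.+1)). Proof. by []. Qed.
Lemma lanW_S k : lanW k.+1 = hscl (invmx (gam k.+2)) (lanWhat k). Proof. by []. Qed.
Lemma lanVprev_S k : lanVprev k.+1 = lanV k. Proof. by []. Qed.
Lemma lanWprev_S k : lanWprev k.+1 = lanW k. Proof. by []. Qed.
Lemma lanbeta_S k : lanbeta k.+1 = invmx (gam k.+2) *m hdot (lanWhat k) (lanVhat k).
Proof. by []. Qed.
Lemma lanV0 : lanV 0 = V. Proof. by []. Qed.
Lemma lanW0 : lanW 0 = W. Proof. by []. Qed.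
Lemma lanVprev0 : lanVprev 0 = hzero N. Proof. by []. Qed.
Lemma lanWprev0 : lanWprev 0 = hzero N. Proof. by []. Qed.
Lemma lanbeta0 : lanbeta 0 = 0. Proof. by []. Qed.
Lemma lanalphaE k : lanalpha k = hdot (vtmul (lanW k) A) (lanV k). Proof. by []. Qed.

Lemma tvmul_lanV k : tvmul A (lanV k) =
  hadd (hadd (hscr (lanV k) (lanalpha k)) (hscr (lanVprev k) (gam k.+1))) (lanVhat k).
Proof.
by apply: functional_extensionality => x; rewrite /lanVhat /hadd /hopp addrC subrK.
Qed.

Lemma vtmul_lanW k : vtmul (lanW k) A =
  hadd (hadd (hscl (lanalpha k) (lanW k)) (hscl (lanbeta k) (lanWprev k))) (lanWhat k).
Proof.
by apply: functional_extensionality => x; rewrite /lanWhat /hadd /hopp addrC subrK.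
Qed.

Hypothesis gam_unit : forall j, (2 <= j)%N -> gam j \in unitmx.

Lemma lanWhatE k : lanWhat k = hscl (gam k.+2) (lanW k.+1).
Proof.
apply: functional_extensionality => x.
by rewrite lanW_S /hscl mulmxA mulmxV ?mul1mx // gam_unit.
Qed.

Lemma lanVhatE k : lanbeta k.+1 \in unitmx -> lanVhat k = hscr (lanV k.+1) (lanbeta k.+1).
Proof.
move=> unit_b; apply: functional_extensionality => x.
by rewrite lanV_S /hscr -mulmxA mulVmx ?mulmx1.
Qed.

Variable n : nat.
Hypothesis beta_unit : forall k, (1 <= k <= n)%N -> lanbeta k \in unitmx.
Hypothesis hdot_WV : hdot W V = 1%:M.

Definition biorth_upto m := forall i j, (i <= m)%N -> (j <= m)%N ->
  hdot (lanW i) (lanV j) = if i == j then 1%:M else 0.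

Section Step.
Variable m : nat.
Hypothesis biorth_m : biorth_upto m.

Lemma hdot_lanW_Vprev i j : (i <= m)%N -> (j <= m)%N ->
  hdot (lanW i) (lanVprev j) = if i.+1 == j then 1%:M else 0.
Proof.
case: j => [|j] le_im le_jm; first by rewrite lanVprev0 hdot0r.
by rewrite lanVprev_S biorth_m ?eqSS // ltnW.
Qed.

Lemma hdot_lanWprev_V i j : (i <= m)%N -> (j <= m)%N ->
  hdot (lanWprev i) (lanV j) = if i == j.+1 then 1%:M else 0.
Proof.
case: i => [|i] le_im le_jm; first by rewrite lanWprev0 hdot0l.
by rewrite lanWprev_S biorth_m ?eqSS // ltnW.
Qed.

Lemma hdot_lanW_Vhat i : (i <= m)%N -> hdot (lanW i) (lanVhat m) = 0.
Proof.
rewrite leq_eqVlt => /orP[/eqP-> | lt_im].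
  rewrite /lanVhat hdot_addr hdot_oppr hdot_addr !hdot_hscr -hdot_vtmul -lanalphaE.
  by rewrite biorth_m // eqxx mul1mx hdot_lanW_Vprev // gtn_eqF // mul0mx addr0 subrr.
have le_im := ltnW lt_im.
rewrite /lanVhat hdot_addr hdot_oppr hdot_addr !hdot_hscr -hdot_vtmul vtmul_lanW lanWhatE.
rewrite !hdot_addl 3!hdot_hscl !biorth_m // hdot_lanWprev_V // hdot_lanW_Vprev //.
rewrite (ltn_eqF lt_im) (ltn_eqF (leqW lt_im)).
by case: eqP => [<-|_]; rewrite ?mulmx0 ?mul0mx ?mulmx1 ?mul1mx ?add0r ?subrr ?oppr0.
Qed.

Lemma hdot_lanWhat_V j : (m <= n)%N -> (j <= m)%N -> hdot (lanWhat m) (lanV j) = 0.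
Proof.
move=> le_mn le_jm.
rewrite /lanWhat hdot_addl hdot_oppl hdot_addl 2!hdot_hscl biorth_m // hdot_lanWprev_V //.
move: le_jm; rewrite leq_eqVlt => /orP[/eqP-> | lt_jm].
  by rewrite -lanalphaE eqxx mulmx1 ltn_eqF // mulmx0 addr0 subrr.
have le_jm := ltnW lt_jm.
rewrite hdot_vtmul tvmul_lanV lanVhatE; last by rewrite beta_unit // (leq_trans lt_jm).
rewrite !hdot_addr 3!hdot_hscr !biorth_m // hdot_lanW_Vprev //.
rewrite (gtn_eqF lt_jm) (gtn_eqF (leqW lt_jm)).
by case: eqP => [->|_]; rewrite ?mulmx0 ?mul0mx ?mulmx1 ?mul1mx ?addr0 ?add0r ?subrr ?oppr0.
Qed.

Lemma biorth_upto_S : (m < n)%N -> biorth_upto m.+1.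
Proof.
move=> lt_mn i j; rewrite [(i <= _)%N]leq_eqVlt [(j <= _)%N]leq_eqVlt !ltnS.
move=> /orP[/eqP-> | le_im] /orP[/eqP-> | le_jm].
- rewrite lanW_S lanV_S hdot_hscl hdot_hscr eqxx mulmxA -lanbeta_S mulmxV //.
  by rewrite beta_unit.
- by rewrite lanW_S hdot_hscl hdot_lanWhat_V ?(ltnW lt_mn) ?mulmx0 ?gtn_eqF.
- by rewrite lanV_S hdot_hscr hdot_lanW_Vhat ?mul0mx ?ltn_eqF.
- exact: biorth_m.
Qed.

End Step.

Lemma biorth_lanczos : biorth_upto n.
Proof.
suff biorth_m m : (m <= n)%N -> biorth_upto m by exact: biorth_m.
elim: m => [_ i j|m IHm lt_mn]; last exact: biorth_upto_S (IHm (ltnW lt_mn)) lt_mn.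
by rewrite !leqn0 => /eqP-> /eqP->; rewrite lanW0 lanV0 hdot_WV.
Qed.

End Lanczos.

Section LanczosRelations.
Variables (C : numClosedFieldType) (M N : nat) (A : tensor4 C M N)
  (V W : hvec C M N) (gam : nat -> 'M[C]_M) (n : nat).

Local Notation lanV := (lanV A V W gam).
Local Notation lanW := (lanW A V W gam).
Local Notation lanalpha := (lanalpha A V W gam).
Local Notation lanbeta := (lanbeta A V W gam).
Local Notation lanVprev := (lanVprev A V W gam).
Local Notation lanWprev := (lanWprev A V W gam).
Local Notation lanVhat := (lanVhat A V W gam).
Local Notation lanWhat := (lanWhat A V W gam).

Let T := Ttri A V W gam n.+1.

Lemma TtriE (i k : 'I_n.+1) : T i k =
  (if k == i :> nat then lanalpha i else 0) + (if k == i.+1 :> nat then gam i.+2 else 0)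
  + (if i == k.+1 :> nat then lanbeta i else 0).
Proof.
rewrite /T /Ttri; case: i k => [i _] [k _] /=.
case: (ltngtP i k) => [lt_ik | lt_ki | ->]; last by rewrite ltn_eqF // !addr0.
- by rewrite (ltn_eqF (leqW lt_ik)); case: eqP; rewrite add0r addr0.
- by rewrite (ltn_eqF (leqW lt_ki)); case: eqP; rewrite !add0r.
Qed.

Lemma tvmul_Ttri c (i : 'I_n.+1) : tvmul T c i =
  lanalpha i *m hext c i + gam i.+2 *m hext c i.+1 + lanbeta i *m hext c i.-1.
Proof.
rewrite /tvmul.
under eq_bigr => k _ do rewrite TtriE -(hext_ord c k) !mulmxDl
  !(fun_if (fun X => X *m hext c k)) !mul0mx.
rewrite !big_split /= (sum_ord_eq (F := fun j => lanalpha i *m hext c j));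
  last by move=> /hext_out->; rewrite mulmx0.
rewrite (sum_ord_eq (F := fun j => gam i.+2 *m hext c j));
  last by move=> /hext_out->; rewrite mulmx0.
congr (_ + _); case: i => [[|i] lt_i] /=.
  by rewrite big1 // lanbeta0 mul0mx.
under eq_bigr => k _ do rewrite eqSS eq_sym.
rewrite (sum_ord_eq (F := fun j => lanbeta i.+1 *m hext c j)) //.
by move=> /hext_out->; rewrite mulmx0.
Qed.

Lemma vtmul_Ttri d (i : 'I_n.+1) : vtmul d T i =
  hext d i *m lanalpha i + (if (0 < i)%N then hext d i.-1 *m gam i.+1 else 0)
  + hext d i.+1 *m lanbeta i.+1.
Proof.
rewrite /vtmul.
under eq_bigr => k _ do rewrite TtriE -(hext_ord d k) !mulmxDr
  !(fun_if (fun X => hext d k *m X)) !mulmx0.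
rewrite !big_split /= (sum_ord_eq (F := fun j => hext d j *m lanbeta j));
  last by move=> /hext_out->; rewrite mul0mx.
under [X in X + _ + _]eq_bigr => k _ do rewrite eq_sym.
rewrite (sum_ord_eq (F := fun j => hext d j *m lanalpha j));
  last by move=> /hext_out->; rewrite mul0mx.
congr (_ + _ + _); case: i => [[|i] lt_i] /=; first by rewrite big1.
under eq_bigr => k _ do rewrite eqSS eq_sym.
rewrite (sum_ord_eq (F := fun j => hext d j *m gam j.+2)) //.
by move=> /hext_out->; rewrite mul0mx.
Qed.

Lemma hext_tvmul_Ttri c j : (j < n.+1)%N -> hext (tvmul T c) j =
  lanalpha j *m hext c j + gam j.+2 *m hext c j.+1 + lanbeta j *m hext c j.-1.
Proof. by move=> lt_jn; rewrite -[j]/(val (Ordinal lt_jn)) hext_ord tvmul_Ttri. Qed.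

Lemma hext_vtmul_Ttri d j : (j < n.+1)%N -> hext (vtmul d T) j =
  hext d j *m lanalpha j + (if (0 < j)%N then hext d j.-1 *m gam j.+1 else 0)
  + hext d j.+1 *m lanbeta j.+1.
Proof. by move=> lt_jn; rewrite -[j]/(val (Ordinal lt_jn)) hext_ord vtmul_Ttri. Qed.

Definition Vcomb (c : hvec C M n.+1) : hvec C M N :=
  fun x => \sum_(j < n.+1) lanV j x *m c j.
Definition Wcomb (d : hvec C M n.+1) : hvec C M N :=
  fun x => \sum_(j < n.+1) d j *m lanW j x.

Lemma Vcomb_nat c x : Vcomb c x = \sum_(0 <= j < n.+1) lanV j x *m hext c j.
Proof. by rewrite big_mkord; apply: eq_bigr => j _; rewrite hext_ord. Qed.

Lemma Wcomb_nat d x : Wcomb d x = \sum_(0 <= j < n.+1) hext d j *m lanW j x.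
Proof. by rewrite big_mkord; apply: eq_bigr => j _; rewrite hext_ord. Qed.

Lemma tvmul_Vcomb_nat c x :
  tvmul A (Vcomb c) x = \sum_(0 <= j < n.+1) tvmul A (lanV j) x *m hext c j.
Proof.
rewrite big_mkord /tvmul /Vcomb.
under eq_bigr => y _ do rewrite mulmx_sumr.
rewrite exchange_big; apply: eq_bigr => j _.
by rewrite hext_ord mulmx_suml; apply: eq_bigr => y _; rewrite mulmxA.
Qed.

Lemma vtmul_Wcomb_nat d x :
  vtmul (Wcomb d) A x = \sum_(0 <= j < n.+1) hext d j *m vtmul (lanW j) A x.
Proof.
rewrite big_mkord /vtmul /Wcomb.
under eq_bigr => y _ do rewrite mulmx_suml.
rewrite exchange_big; apply: eq_bigr => j _.
by rewrite hext_ord mulmx_sumr; apply: eq_bigr => y _; rewrite mulmxA.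
Qed.

Hypothesis gam_unit : forall j, (2 <= j)%N -> gam j \in unitmx.
Hypothesis beta_unit : forall k, (1 <= k <= n)%N -> lanbeta k \in unitmx.

Lemma tvmul_Vcomb c :
  tvmul A (Vcomb c) = hadd (Vcomb (tvmul T c)) (hscr (lanVhat n) (hext c n)).
Proof.
apply: functional_extensionality => x; rewrite /hadd /hscr tvmul_Vcomb_nat Vcomb_nat.
have tvmul_lanV_at j : tvmul A (lanV j) x =
    lanV j x *m lanalpha j + lanVprev j x *m gam j.+1 + lanVhat j x.
  by rewrite tvmul_lanV.
under eq_bigr do rewrite tvmul_lanV_at 2!mulmxDl.
under [in RHS]eq_big_nat => j /andP[_ lt_jn] do
  rewrite hext_tvmul_Ttri // !mulmxDr !mulmxA.
have shift_gam : \sum_(0 <= j < n.+1) lanVprev j x *m gam j.+1 *m hext c j =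
    \sum_(0 <= j < n.+1) lanV j x *m gam j.+2 *m hext c j.+1.
  rewrite big_nat_recl // lanVprev0 /hzero !mul0mx add0r.
  by rewrite big_nat_recr //= hext_out // mulmx0 addr0.
have shift_beta : \sum_(0 <= j < n.+1) lanVhat j x *m hext c j =
    \sum_(0 <= j < n.+1) lanV j x *m lanbeta j *m hext c j.-1 + lanVhat n x *m hext c n.
  rewrite big_nat_recr //= [in RHS]big_nat_recl // lanbeta0 mulmx0 mul0mx add0r.
  congr (_ + _); apply: eq_big_nat => j /andP[_ lt_jn].
  by rewrite lanVhatE ?beta_unit.
by rewrite !big_split /= shift_gam shift_beta !addrA.
Qed.

Lemma vtmul_Wcomb d :
  vtmul (Wcomb d) A = hadd (Wcomb (vtmul d T)) (hscl (hext d n) (lanWhat n)).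
Proof.
apply: functional_extensionality => x; rewrite /hadd /hscl vtmul_Wcomb_nat Wcomb_nat.
have vtmul_lanW_at j : vtmul (lanW j) A x =
    lanalpha j *m lanW j x + lanbeta j *m lanWprev j x + lanWhat j x.
  by rewrite vtmul_lanW.
under eq_bigr do rewrite vtmul_lanW_at 2!mulmxDr !mulmxA.
under [in RHS]eq_big_nat => j /andP[_ lt_jn] do rewrite hext_vtmul_Ttri // !mulmxDl.
have shift_beta : \sum_(0 <= j < n.+1) hext d j *m lanbeta j *m lanWprev j x =
    \sum_(0 <= j < n.+1) hext d j.+1 *m lanbeta j.+1 *m lanW j x.
  rewrite big_nat_recl // lanbeta0 mulmx0 add0r.
  by rewrite big_nat_recr //= hext_out // !mul0mx addr0.
have shift_gam : \sum_(0 <= j < n.+1) hext d j *m lanWhat j x =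
    \sum_(0 <= j < n.+1) (if (0 < j)%N then hext d j.-1 *m gam j.+1 else 0) *m lanW j x
    + hext d n *m lanWhat n x.
  rewrite big_nat_recr //= [in RHS]big_nat_recl //= mul0mx add0r.
  by congr (_ + _); apply: eq_big_nat => j _; rewrite lanWhatE // mulmxA.
by rewrite !big_split /= shift_beta shift_gam !addrA; congr (_ + _); exact: addrAC.
Qed.

Lemma hdot_Wcomb d Y : hdot (Wcomb d) Y = \sum_(i < n.+1) d i *m hdot (lanW i) Y.
Proof.
rewrite /hdot /Wcomb.
under eq_bigr => y _ do rewrite mulmx_suml.
rewrite exchange_big; apply: eq_bigr => i _.
by rewrite mulmx_sumr; apply: eq_bigr => y _; rewrite mulmxA.
Qed.

Lemma hdot_Vcomb X c : hdot X (Vcomb c) = \sum_(j < n.+1) hdot X (lanV j) *m c j.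
Proof.
rewrite /hdot /Vcomb.
under eq_bigr => y _ do rewrite mulmx_sumr.
rewrite exchange_big; apply: eq_bigr => j _.
by rewrite mulmx_suml; apply: eq_bigr => y _; rewrite mulmxA.
Qed.

Hypothesis hdot_WV : hdot W V = 1%:M.

Lemma hdot_Wcomb_Vcomb d c : hdot (Wcomb d) (Vcomb c) = hdot d c.
Proof.
have biorth := biorth_lanczos gam_unit beta_unit hdot_WV.
rewrite hdot_Wcomb; apply: eq_bigr => i _; congr (_ *m _).
rewrite hdot_Vcomb (bigD1 i) //= biorth ?leq_ord // eqxx mul1mx big1 ?addr0 // => j ne_ji.
by rewrite biorth ?leq_ord // eq_sym (val_eqE j i) (negbTE ne_ji) mul0mx.
Qed.

Lemma hdot_Wcomb_Vhat d : hdot (Wcomb d) (lanVhat n) = 0.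
Proof.
have biorth := biorth_lanczos gam_unit beta_unit hdot_WV.
rewrite hdot_Wcomb big1 // => i _.
by rewrite (hdot_lanW_Vhat gam_unit biorth) ?mulmx0 ?leq_ord.
Qed.

Let E := Efirst (C := C) (M := M) n.+1.

Lemma hext_Efirst j : hext E j = if j == 0%N then 1%:M else 0.
Proof.
case: (ltnP j n.+1) => [lt_jn | le_nj].
  by rewrite -[j]/(val (Ordinal lt_jn)) hext_ord.
by rewrite hext_out // gtn_eqF // (leq_trans _ le_nj).
Qed.

Lemma Vcomb_Efirst : Vcomb E = V.
Proof.
apply: functional_extensionality => x.
rewrite Vcomb_nat big_nat_recl // hext_Efirst mulmx1 big1 ?addr0 // => j _.
by rewrite hext_Efirst mulmx0.
Qed.

Lemma Wcomb_Efirst : Wcomb E = W.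
Proof.
apply: functional_extensionality => x.
rewrite Wcomb_nat big_nat_recl // hext_Efirst mul1mx big1 ?addr0 // => j _.
by rewrite hext_Efirst mul0mx.
Qed.

Lemma hext_tviter_Efirst b j : (b < j)%N -> hext (tviter T b E) j = 0.
Proof.
elim: b j => [|b IHb] j lt_bj; first by rewrite hext_Efirst gtn_eqF.
case: (ltnP j n.+1) => [lt_jn | le_nj]; last by rewrite hext_out.
by rewrite /tviter iterS -/(tviter T b E) hext_tvmul_Ttri // !IHb ?mulmx0 ?addr0 //; lia.
Qed.

Lemma hext_vtiter_Efirst a j : (a < j)%N -> hext (vtiter T a E) j = 0.
Proof.
elim: a j => [|a IHa] j lt_aj; first by rewrite hext_Efirst gtn_eqF.
case: (ltnP j n.+1) => [lt_jn | le_nj]; last by rewrite hext_out.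
rewrite /vtiter iterS -/(vtiter T a E) hext_vtmul_Ttri // !IHa ?mul0mx ?addr0; try lia.
by rewrite if_same add0r.
Qed.

Lemma tviter_Vcomb b : (b <= n)%N -> tviter A b V = Vcomb (tviter T b E).
Proof.
elim: b => [_|b IHb lt_bn]; first by rewrite Vcomb_Efirst.
rewrite /tviter !iterS -/(tviter A b V) -/(tviter T b E) (IHb (ltnW lt_bn)) tvmul_Vcomb.
rewrite hext_tviter_Efirst //.
by apply: functional_extensionality => x; rewrite /hadd /hscr mulmx0 addr0.
Qed.

Lemma vtiter_Wcomb a : (a <= n)%N -> vtiter A a W = Wcomb (vtiter T a E).
Proof.
elim: a => [_|a IHa lt_an]; first by rewrite Wcomb_Efirst.
rewrite /vtiter !iterS -/(vtiter A a W) -/(vtiter T a E) (IHa (ltnW lt_an)) vtmul_Wcomb.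
rewrite hext_vtiter_Efirst //.
by apply: functional_extensionality => x; rewrite /hadd /hscl mul0mx addr0.
Qed.

Lemma hdot_vtiter_tviter a b : (a <= n)%N -> (b <= n.+1)%N ->
  hdot (vtiter A a W) (tviter A b V) = hdot (vtiter T a E) (tviter T b E).
Proof.
move=> le_an; rewrite leq_eqVlt ltnS vtiter_Wcomb // => /orP[/eqP-> | le_bn].
  rewrite /tviter !iterS -/(tviter A n V) -/(tviter T n E) tviter_Vcomb //.
  by rewrite tvmul_Vcomb hdot_addr hdot_hscr hdot_Wcomb_Vhat mul0mx addr0 hdot_Wcomb_Vcomb.
by rewrite tviter_Vcomb // hdot_Wcomb_Vcomb.
Qed.

End LanczosRelations.

Theorem theorem3p2 (C : numClosedFieldType) (N M : nat)
  (A : tensor4 C M N) (v w : 'I_N -> C) (gam : nat -> 'M[C]_M) (n : nat) :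
  \sum_(i < N) (w i)^* * v i = 1 ->
  (forall j, (2 <= j)%N -> gam j \in unitmx) ->
  (1 <= n)%N ->
  (forall j, (2 <= j <= n)%N ->
     beta A (kronI M v) (kronI M (fun i => (w i)^*)) gam j \in unitmx) ->
  forall k, (k < 2 * n)%N ->
    hdot (vtmul (kronI M (fun i => (w i)^*)) (tpow A k)) (kronI M v)
    = hdot (vtmul (Efirst n)
                  (tpow (Ttri A (kronI M v) (kronI M (fun i => (w i)^*)) gam n) k))
           (Efirst n).
Proof.
move=> wv_1 gam_unit n_gt0 beta_unit k lt_k.
case: n n_gt0 beta_unit lt_k => [//|n] _ beta_unit lt_k.
have lanbeta_unit j : (1 <= j <= n)%N ->
    lanbeta A (kronI M v) (kronI M (fun i => (w i)^*)) gam j \in unitmx.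
  by move=> /andP[j_gt0 le_jn]; apply: (beta_unit j.+1); rewrite ltnS j_gt0.
have hdot_WV : hdot (kronI M (fun i => (w i)^*)) (kronI M v) = 1%:M.
  by rewrite hdot_kronI wv_1.
have -> : k = (minn k n + (k - minn k n))%N by rewrite subnKC // geq_minl.
rewrite !hdot_tpowD (hdot_vtiter_tviter gam_unit lanbeta_unit hdot_WV) ?geq_minr //.
lia.
Qed.
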